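(* Let $0\le\theta<1/2$ and $m\ge1$ an integer, and let $X_1,\dots,X_m$ be i.i.d. $\mathrm{Rad}(\tfrac12+\theta)$ random variables. Then $X=\sum_{i=1}^mX_i$ satisfies $$\Pr(X>0)-\Pr(X<0)\ge\sqrt{\frac{2}{\pi e}}\cdot\min\{\sqrt{m}\,\theta,1\}.$$
   Context: $\mathrm{Rad}(p)$ denotes the distribution of a random variable taking value $1$ with probability $p$ and $-1$ with probability $1-p$. *)

From HB Require Import structures.
From mathcomp Require Import all_boot all_order all_algebra.
From mathcomp Require Import all_classical all_reals all_analysis.
Set Implicit Arguments. Unset Strict Implicit. Unset Printing Implicit Defensive.
Import Order.TTheory GRing.Theory Num.Theory.
Local Open Scope ring_scope.

(* Canonical model of m i.i.d. Rad(p) random variables X_1..X_m: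
   the sample space is {ffun 'I_m -> bool}; outcome w has X_i(w) = 1 if w i
   and X_i(w) = -1 otherwise; the probability of w is the product of the
   marginal Rad(p) probabilities (independence + identical distribution). *)

Definition rad_val (b : bool) : int := if b then 1 else -1.

Definition rad_sum (m : nat) (w : {ffun 'I_m -> bool}) : int :=
  \sum_(i < m) rad_val (w i).

Definition rad_pmf (R : realType) (p : R) (m : nat) (w : {ffun 'I_m -> bool}) : R :=
  \prod_(i < m) (if w i then p else 1 - p).

Definition Pr_sum_pos (R : realType) (p : R) (m : nat) : R :=
  \sum_(w : {ffun 'I_m -> bool} | (0 < rad_sum w)%R) rad_pmf p w.

Definition Pr_sum_neg (R : realType) (p : R) (m : nat) : R :=
  \sum_(w : {ffun 'I_m -> bool} | (rad_sum w < 0)%R) rad_pmf p w.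

(* D_m := Pr(X > 0) - Pr(X < 0) is the expectation of sgz X.  Adding one
   variable changes sgz X only when |X| <= 1: from an even m the atom at 0
   adds (2p - 1) C(m, m/2) (p(1 - p))^(m/2), from an odd m the contributions
   of X = 1 and X = -1 cancel.  Hence
     D_m = (2p - 1) * sum_(j < ceil(m/2)) C(2j, j) (p(1 - p))^j.
   Since C(2j, j)^2 (4j + 1) >= 16^j, each antidiagonal sum of this series
   squared is at least (4p(1 - p))^n / 2, and 4p(1 - p) = 1 - (2p - 1)^2, so
   2 D_m^2 >= 1 - (1 - (2p - 1)^2)^ceil(m/2) >= 1 - exp(-m (2p - 1)^2 / 2).
   Concavity of 1 - exp(-x) on [0, 2] and 4 / (pi e) <= 1 - exp(-2) give the
   constant. *)

From HB Require Import structures.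
From mathcomp Require Import all_boot all_order all_algebra.
From mathcomp Require Import all_classical all_reals all_analysis.
From mathcomp Require Import zify ring lra.
Import Order.TTheory GRing.Theory Num.Theory.
Set Implicit Arguments. Unset Strict Implicit. Unset Printing Implicit Defensive.

Section CentralBinomial.
Local Open Scope nat_scope.

Lemma bin_odd_mid K : 'C(K.*2.+1, K.+1) = 'C(K.*2.+1, K).
Proof. by rewrite -bin_sub; [congr 'C(_, _); lia | lia]. Qed.

Lemma mul_bin_doubleS j : j.+1 * 'C(j.+1.*2, j.+1) = 2 * j.*2.+1 * 'C(j.*2, j).
Proof.
have := mul_bin_diag j.*2.+2 j; have := mul_bin_diag j.*2.+1 j.
rewrite bin_odd_mid doubleS /= => h1 h2.
by apply/eqP; rewrite -(eqn_pmul2l (ltn0Sn j)); apply/eqP; nia.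
Qed.

Lemma bin_double_sqr_ge j : 16 ^ j <= 'C(j.*2, j) ^ 2 * (4 * j + 1).
Proof.
elim: j => [|j IH]; first by rewrite bin0.
rewrite -(@leq_pmul2l (j.+1 ^ 2 * (4 * j + 1))); last by rewrite muln_gt0 expn_gt0 addn1.
have -> : j.+1 ^ 2 * (4 * j + 1) * ('C(j.+1.*2, j.+1) ^ 2 * (4 * j.+1 + 1)) =
          (2 * j.*2.+1) ^ 2 * (4 * j + 5) * ('C(j.*2, j) ^ 2 * (4 * j + 1)).
  transitivity ((j.+1 * 'C(j.+1.*2, j.+1)) ^ 2 * (4 * j + 1) * (4 * j + 5)); first by ring.
  by rewrite mul_bin_doubleS; ring.
apply: leq_trans (leq_mul (leqnn _) IH).
by rewrite [16 ^ _]expnS mulnA leq_mul2r -mul2n; apply/orP; right; nia.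
Qed.

Lemma bin_double_mul_ge i j :
  4 ^ (i + j) <= 'C(i.*2, i) * 'C(j.*2, j) * (2 * (i + j) + 1).
Proof.
rewrite -(@leq_exp2r _ _ 2) //.
have -> : (4 ^ (i + j)) ^ 2 = 16 ^ i * 16 ^ j by rewrite -expnM mulnC expnM expnD.
apply: (leq_trans (leq_mul (bin_double_sqr_ge i) (bin_double_sqr_ge j))).
rewrite [leqLHS](_ : _ = 'C(i.*2, i) ^ 2 * 'C(j.*2, j) ^ 2 * ((4 * i + 1) * (4 * j + 1))).
  by rewrite !expnMn leq_mul //; have := (nat_AGM2 i j).1; nia.
by ring.
Qed.

Lemma bin_double_convolution_ge n :
  4 ^ n <= 2 * \sum_(i < n.+1) 'C(i.*2, i) * 'C((n - i).*2, n - i).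
Proof.
rewrite -(@leq_pmul2l n.+1) // mulnCA.
apply: (@leq_trans ((2 * n + 1) * \sum_(i < n.+1) 'C(i.*2, i) * 'C((n - i).*2, n - i))).
  have -> : n.+1 * 4 ^ n = \sum_(i < n.+1) 4 ^ n by rewrite sum_nat_const card_ord.
  rewrite mulnC big_distrl leq_sum //= => i _.
  by have := bin_double_mul_ge i (n - i); rewrite subnKC // -ltnS.
by rewrite mulnA leq_mul //; lia.
Qed.

End CentralBinomial.

Local Open Scope ring_scope.

Lemma sum_antidiagonal_le_sqr (R : numDomainType) (b : nat -> R) N :
  (forall j, 0 <= b j) ->
  \sum_(n < N) \sum_(i < n.+1) b i * b (n - i)%N <= (\sum_(j < N) b j) ^+ 2.
Proof.
move=> b_ge0.
have shifted_le i : \sum_(i <= n < N) b (n - i)%N <= \sum_(0 <= j < N) b j.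
  rewrite -{1}[i]add0n big_addn; under eq_bigr do rewrite addnK.
  rewrite [leRHS](@big_cat_nat _ _ _ (N - i) 0 N) ?leq_subr //= lerDl.
  by apply: sumr_ge0 => j _.
have -> : \sum_(n < N) \sum_(i < n.+1) b i * b (n - i)%N
        = \sum_(0 <= i < N) b i * \sum_(i <= n < N) b (n - i)%N.
  rewrite -(big_mkord xpredT (fun n => \sum_(i < n.+1) b i * b (n - i)%N)).
  under eq_big_nat => n /andP[_ ltnN] do
    rewrite -(big_mkord xpredT (fun i => b i * b (n - i)%N)) (big_nat_widen _ _ _ _ _ ltnN).
  rewrite /= (exchange_big_dep_nat xpredT) //=; apply: eq_big_nat => i /andP[_ ltiN].
  rewrite mulr_sumr (big_cat_nat (leq0n i) (ltnW ltiN)) /= big1_seq ?add0r.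
    rewrite big_nat_cond [RHS]big_nat_cond; apply: eq_bigl => n.
    by rewrite ltnS andbT; apply/andb_idr => /andP[].
  by move=> n /andP[lein]; rewrite mem_index_iota; lia.
rewrite expr2 -(big_mkord xpredT b) mulr_suml; apply: ler_sum_nat => i _.
by rewrite ler_wpM2l.
Qed.

Lemma central_binomial_series_sqr_ge (R : numDomainType) (y : R) N : 0 <= y ->
  \sum_(n < N) (4 * y) ^+ n <= 2 * (\sum_(j < N) 'C(j.*2, j)%:R * y ^+ j) ^+ 2.
Proof.
move=> y_ge0; pose b j := 'C(j.*2, j)%:R * y ^+ j.
have b_ge0 j : 0 <= b j by rewrite mulr_ge0 ?exprn_ge0.
apply: le_trans (ler_wpM2l _ (sum_antidiagonal_le_sqr N b_ge0)) => //.
rewrite mulr_sumr; apply: ler_sum => n _.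
have -> : \sum_(i < n.+1) b i * b (n - i)%N =
    (\sum_(i < n.+1) 'C(i.*2, i) * 'C((n - i).*2, n - i))%:R * y ^+ n.
  rewrite natr_sum mulr_suml; apply: eq_bigr => i _.
  by rewrite /b natrM mulrACA -exprD subnKC // -ltnS.
rewrite exprMn mulrA ler_wpM2r ?exprn_ge0 //.
by rewrite -natrX -[2]/(2%:R) -natrM ler_nat bin_double_convolution_ge.
Qed.

Section RademacherSum.
Variables (R : realType) (p : R).

Definition rad_expect m (F : int -> R) : R :=
  \sum_(w : {ffun 'I_m -> bool}) rad_pmf p w * F (rad_sum w).

Definition rad_mass m (j : int) : R := rad_expect m (fun s => (s == j)%:R).

Definition ffun_rcons m (bw : bool * {ffun 'I_m -> bool}) : {ffun 'I_m.+1 -> bool} :=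
  [ffun i => if unlift ord_max i is Some j then bw.2 j else bw.1].

Lemma ffun_rcons_bij m : bijective (@ffun_rcons m).
Proof.
exists (fun v : {ffun 'I_m.+1 -> bool} => (v ord_max, [ffun j : 'I_m => v (lift ord_max j)])).
- case=> b w; rewrite /ffun_rcons /= !ffunE unlift_none; congr (_, _).
  by apply/ffunP => j; rewrite !ffunE liftK.
- move=> v; apply/ffunP => i; rewrite /ffun_rcons ffunE /=.
  by case: unliftP => [j ->|->]; rewrite ?ffunE.
Qed.

Lemma big_ffun_rcons (T : Type) (idx : T) (op : Monoid.law idx) m (F : bool -> T) b w :
  \big[op/idx]_(i < m.+1) F (ffun_rcons (b, w) i) = op (\big[op/idx]_(i < m) F (w i)) (F b).
Proof.
rewrite big_ord_recr /ffun_rcons ffunE unlift_none /=; congr (op _ _).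
apply: eq_bigr => i _; rewrite ffunE.
suff -> : widen_ord (leqnSn m) i = lift ord_max i by rewrite liftK.
by apply/val_inj; rewrite /= /bump leqNgt ltn_ord.
Qed.

Lemma rad_expectS m F : rad_expect m.+1 F =
  p * rad_expect m (fun s => F (s + 1)) + (1 - p) * rad_expect m (fun s => F (s - 1)).
Proof.
rewrite /rad_expect (reindex (@ffun_rcons m)) /=; last exact/onW_bij/ffun_rcons_bij.
rewrite -(pair_big xpredT xpredT (fun b w => rad_pmf p (ffun_rcons (b, w)) *
  F (rad_sum (ffun_rcons (b, w))))) big_bool /= !mulr_sumr.
congr (_ + _); apply: eq_bigr => w _;
  by rewrite /rad_pmf /rad_sum (big_ffun_rcons _ (fun c => if c then p else 1 - p))
    big_ffun_rcons mulrAC mulrC.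
Qed.

Lemma rad_expect0 F : rad_expect 0 F = F 0.
Proof.
rewrite /rad_expect (big_pred1 [ffun=> false]) => [|w]; last first.
  by apply/esym/eqP/ffunP => -[].
by rewrite /rad_pmf /rad_sum !big_ord0 mul1r.
Qed.

Lemma rad_expect_binomial m F : rad_expect m F =
  \sum_(k < m.+1) 'C(m, k)%:R * p ^+ k * (1 - p) ^+ (m - k) * F (k%:Z * 2 - m%:Z).
Proof.
elim: m F => [|m IH] F.
  by rewrite rad_expect0 big_ord_recl big_ord0 /= bin0 expr0 !mul1r addr0.
rewrite rad_expectS !IH [RHS]big_ord_recl.
under [in RHS]eq_bigr => i _ do rewrite lift0 binS natrD !mulrDl.
rewrite [in RHS]big_split /= addrA addrC; congr (_ + _).
  rewrite mulr_sumr; apply: eq_bigr => k _.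
  rewrite subSS exprS.
  have -> : (k.+1%:Z * 2 - m.+1%:Z) = k%:Z * 2 - m%:Z + 1 by lia.
  ring.
rewrite big_ord_recl mulrDr; congr (_ + _).
  rewrite !bin0 !subn0 exprS.
  have -> : (0%:Z * 2 - m.+1%:Z) = 0%:Z * 2 - m%:Z - 1 by lia.
  ring.
rewrite [RHS]big_ord_recr /= bin_small // mul0r !mul0r addr0 mulr_sumr.
apply: eq_bigr => i _ /=; rewrite /bump /= add1n subSS.
rewrite -(subnSK (ltn_ord i)) exprS.
have -> : (i.+1%:Z * 2 - m.+1%:Z) = i.+1%:Z * 2 - m%:Z - 1 by lia.
rewrite [(1 - p) ^+ (m - i.+1).+1]exprS; ring.
Qed.

Lemma rad_mass_binomial m k : (k <= m)%N ->
  rad_mass m (k%:Z * 2 - m%:Z) = 'C(m, k)%:R * p ^+ k * (1 - p) ^+ (m - k).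
Proof.
rewrite -ltnS => ltkm; rewrite /rad_mass rad_expect_binomial (bigD1 (Ordinal ltkm)) //=.
rewrite eqxx mulr1 big1 ?addr0 // => i /eqP neqik.
suff /negPf -> : i%:Z * 2 - m%:Z != k%:Z * 2 - m%:Z by rewrite mulr0.
by apply/eqP => eqik; apply: neqik; apply/val_inj => /=; lia.
Qed.

Lemma rad_mass_eq0 m j :
  (forall k, (k <= m)%N -> k%:Z * 2 - m%:Z != j) -> rad_mass m j = 0.
Proof.
move=> notin_support; rewrite /rad_mass rad_expect_binomial big1 // => k _.
by rewrite (negPf (notin_support k _)) ?mulr0 // -ltnS.
Qed.

Definition sgzR (s : int) : R := (sgz s)%:~R.

Lemma rad_bias_expect m :
  Pr_sum_pos p m - Pr_sum_neg p m = rad_expect m sgzR.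
Proof.
rewrite /Pr_sum_pos /Pr_sum_neg /rad_expect !(big_mkcond (fun w => _ < _)) -sumrB.
apply: eq_bigr => w _; rewrite /sgzR /sgz; case: ltrgt0P => _;
  by rewrite ?(subr0, sub0r, subrr, mulr0, mulr1z, mulrN1z, mulr1, mulrN1).
Qed.

Lemma rad_expect_sgzS m : rad_expect m.+1 sgzR = rad_expect m sgzR +
  (2 * p - 1) * rad_mass m 0 + p * rad_mass m (-1) - (1 - p) * rad_mass m 1.
Proof.
rewrite rad_expectS /rad_mass /rad_expect !mulr_sumr -sumrN -!big_split /=.
have sgzS s : sgzR (s + 1) = sgzR s + (s == 0)%:R + (s == -1)%:R.
  by case: s => [[|[|n]]|[|n]] //=; rewrite /sgzR ?(subrr, addr0, add0r, subr0, sub0r, addNr).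
have sgzB s : sgzR (s - 1) = sgzR s - (s == 0)%:R - (s == 1)%:R.
  by case: s => [[|[|n]]|[|n]] //=; rewrite /sgzR ?(subrr, addr0, add0r, subr0, sub0r, addNr).
by apply: eq_bigr => w _; rewrite sgzS sgzB; ring.
Qed.

Lemma rad_expect_sgz_doubleS K : rad_expect K.*2.+1 sgzR =
  rad_expect K.*2 sgzR + (2 * p - 1) * ('C(K.*2, K)%:R * (p * (1 - p)) ^+ K).
Proof.
have mass0 : rad_mass K.*2 0 = 'C(K.*2, K)%:R * (p * (1 - p)) ^+ K.
  rewrite -[X in rad_mass _ X](_ : K%:Z * 2 - (K.*2)%:Z = 0) ?rad_mass_binomial; try lia.
  by rewrite exprMn mulrA (_ : K.*2 - K = K)%N //; lia.
rewrite rad_expect_sgzS mass0 !rad_mass_eq0 ?mulr0 ?subr0 ?addr0 // => k _; apply/eqP; lia.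
Qed.

Lemma rad_expect_sgz_doubleSS K : rad_expect K.*2.+2 sgzR = rad_expect K.*2.+1 sgzR.
Proof.
have massN1 : rad_mass K.*2.+1 (-1) = 'C(K.*2.+1, K)%:R * p ^+ K * (1 - p) ^+ K.+1.
  rewrite -[X in rad_mass _ X](_ : K%:Z * 2 - (K.*2.+1)%:Z = -1) ?rad_mass_binomial; try lia.
  by rewrite (_ : K.*2.+1 - K = K.+1)%N //; lia.
have mass1 : rad_mass K.*2.+1 1 = 'C(K.*2.+1, K)%:R * p ^+ K.+1 * (1 - p) ^+ K.
  rewrite -[X in rad_mass _ X](_ : K.+1%:Z * 2 - (K.*2.+1)%:Z = 1) ?rad_mass_binomial; try lia.
  rewrite (_ : K.*2.+1 - K.+1 = K)%N; last by lia.
  by rewrite bin_odd_mid.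
rewrite rad_expect_sgzS massN1 mass1 rad_mass_eq0 => [|k _]; last by apply/eqP; lia.
by rewrite !exprS; ring.
Qed.

Lemma rad_expect_sgz m : rad_expect m sgzR =
  (2 * p - 1) * \sum_(j < uphalf m) 'C(j.*2, j)%:R * (p * (1 - p)) ^+ j.
Proof.
have even K : rad_expect K.*2 sgzR =
    (2 * p - 1) * \sum_(j < K) 'C(j.*2, j)%:R * (p * (1 - p)) ^+ j.
  elim: K => [|K IH]; first by rewrite big_ord0 mulr0 rad_expect0 /sgzR.
  by rewrite doubleS rad_expect_sgz_doubleSS rad_expect_sgz_doubleS IH big_ord_recr -mulrDr.
rewrite -[in LHS](odd_double_half m) uphalf_half; case: (odd m) => /=.
  by rewrite add1n rad_expect_sgz_doubleS even big_ord_recr -mulrDr.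
by rewrite add0n even.
Qed.

End RademacherSum.

Section ExpBounds.
Variable R : realType.

Lemma onem_expR_chord (x : R) : 0 <= x <= 1 -> x * (1 - expR (-2)) <= 1 - expR (-2 * x).
Proof.
case/andP=> x0 x1; have := convex_expR (Itv01 x0 x1) (-2) 0.
rewrite !convRE /= expR0 mulr0 addr0 mulr1 [_ * -2]mulrC /unstable.onem; lra.
Qed.

Lemma expr_onem_le_expR (z : R) N : 0 <= z <= 1 -> (1 - z) ^+ N <= expR (- (N%:R * z)).
Proof.
case/andP=> z0 z1; rewrite -mulrN expRM_natl lerXn2r ?nnegrE ?expR_ge0 ?subr_ge0 //.
exact: expR_ge1Dx.
Qed.

Lemma expR1_ge : 625 / 256 <= expR 1 :> R.
Proof.
have -> : expR 1 = expR (1 / 4) ^+ 4 :> R by rewrite -expRM_natl; congr expR; field.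
have -> : 625 / 256 = (1 + 1 / 4) ^+ 4 :> R by field.
by rewrite lerXn2r ?nnegrE ?expR_ge1Dx //; lra.
Qed.

Lemma four_div_pi_e_le : 4 / (pi * expR 1) <= 1 - expR (-2) :> R.
Proof.
have e_ge := expR1_ge; have pi_ge := @pi_ge2 R.
have -> : expR (-2) = (expR 1)^-1 ^+ 2 :> R by rewrite -expRN -expRM_natl mulrN1.
set a := (expR 1)^-1.
have a0 : 0 < a by rewrite invr_gt0 expR_gt0.
have a_le : a <= 256 / 625 by rewrite -[256 / 625 : R]invf_div lef_pV2 ?posrE ?expR_gt0; lra.
have -> : 4 / (pi * expR 1) = 4 * a / pi by rewrite /a invfM; field; lra.
have : 4 * a / pi <= 2 * a by rewrite ler_pdivrMr; nra.
nra.
Qed.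

End ExpBounds.

Section RademacherBias.
Variables (R : realType) (p : R) (m : nat).
Hypothesis p01 : 0 <= p <= 1.

Let pq_ge0 : 0 <= p * (1 - p).
Proof. by case/andP: p01 => p0 p1; rewrite mulr_ge0 ?subr_ge0. Qed.

Lemma rad_bias_ge0 : 1 / 2 <= p -> 0 <= Pr_sum_pos p m - Pr_sum_neg p m.
Proof.
move=> p_ge; rewrite rad_bias_expect rad_expect_sgz mulr_ge0 //; first lra.
by apply: sumr_ge0 => j _; rewrite mulr_ge0 ?exprn_ge0.
Qed.

Lemma rad_bias_sqr_ge : (0 < m)%N ->
  1 - expR (- (m%:R * (2 * p - 1) ^+ 2 / 2)) <= 2 * (Pr_sum_pos p m - Pr_sum_neg p m) ^+ 2.
Proof.
move=> m_gt0; set d := 2 * p - 1; set N := uphalf m.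
have d2_01 : 0 <= d ^+ 2 <= 1 by case/andP: p01 => p0 p1; rewrite sqr_ge0 /d /=; nra.
have [d2_ge0 _] := andP d2_01.
have m_le : m%:R / 2 <= N%:R :> R.
  by rewrite ler_pdivrMr // -[2]/(2%:R) -natrM ler_nat muln2 uphalfK leq_addl.
have geom : 1 - (1 - d ^+ 2) ^+ N = d ^+ 2 * \sum_(n < N) (1 - d ^+ 2) ^+ n.
  by rewrite -{1}(expr1n _ N) subrXX subKr; under eq_bigr do rewrite expr1n mul1r.
have := central_binomial_series_sqr_ge N pq_ge0.
rewrite rad_bias_expect rad_expect_sgz -/N (_ : 4 * (p * (1 - p)) = 1 - d ^+ 2); last first.
  by rewrite /d; ring.
set S := \sum_(j < N) _ => series_le.
apply: (@le_trans _ _ (1 - (1 - d ^+ 2) ^+ N)).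
  rewrite lerB // (le_trans (expr_onem_le_expR N d2_01)) // ler_expR lerN2 mulrAC.
  by rewrite ler_wpM2r.
by rewrite geom exprMn mulrCA ler_wpM2l.
Qed.

End RademacherBias.

Theorem lemma22 (R : realType) (theta : R) (m : nat) :
  0 <= theta -> theta < 1 / 2 -> (1 <= m)%N ->
  Pr_sum_pos (1 / 2 + theta) m - Pr_sum_neg (1 / 2 + theta) m >=
    Num.sqrt (2 / (pi * expR 1)) * Num.min (Num.sqrt (m%:R) * theta) 1.
Proof.
move=> theta0 theta_lt m_gt0.
set p := 1 / 2 + theta; set D := Pr_sum_pos p m - Pr_sum_neg p m.
set M := Num.min _ 1; set A := 2 / (pi * expR 1).
have p01 : 0 <= p <= 1 by rewrite /p; apply/andP; split; lra.
have D_ge0 : 0 <= D by apply: rad_bias_ge0 => //; rewrite /p; lra.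
have D2_ge : 1 - expR (- (m%:R * (2 * p - 1) ^+ 2 / 2)) <= 2 * D ^+ 2.
  exact: rad_bias_sqr_ge.
have M_ge0 : 0 <= M by rewrite le_min ler01 mulr_ge0 ?sqrtr_ge0.
have A_ge0 : 0 <= A by rewrite divr_ge0 ?mulr_ge0 ?pi_ge0 ?expR_ge0.
set c := Num.min (m%:R * theta ^+ 2) 1.
have c01 : 0 <= c <= 1 by rewrite le_min ge_min lexx orbT ler01 mulr_ge0 ?sqr_ge0.
have M2_le : M ^+ 2 <= c.
  rewrite le_min expr_le1 // ge_min lexx orbT andbT -[m%:R]sqr_sqrtr // -exprMn.
  by rewrite ler_sqr ?nnegrE ?mulr_ge0 ?sqrtr_ge0 // ge_min lexx.
have c_le : c <= m%:R * theta ^+ 2 by rewrite ge_min lexx.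
have exp_le : expR (- (m%:R * (2 * p - 1) ^+ 2 / 2)) <= expR (-2 * c).
  by rewrite ler_expR /p; lra.
have chord := onem_expR_chord c01.
have const_le : 2 * A <= 1 - expR (-2).
  by rewrite (_ : 2 * A = 4 / (pi * expR 1)) ?four_div_pi_e_le // /A; ring.
rewrite -(@ler_pXn2r _ 2) ?nnegrE ?mulr_ge0 ?sqrtr_ge0 // exprMn sqr_sqrtr //.
have := ler_wpM2l A_ge0 M2_le; have := ler_wpM2l (proj1 (andP c01)) const_le.
lra.
Qed.
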